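(* Let $1\le k\le n-1$ and let $\Sigma=\mathbb{S}^k\times\mathbb{R}^{n-k}\subset\mathbb{R}^{n+1}$ be a self-shrinker. Let $H\subset\mathbb{R}^{n-k}$ be an open half-space whose boundary is an $(n-k-1)$-dimensional linear subspace (through the origin). Then $\mathbb{S}^k\times H\subset\Sigma$ is unstable, i.e. $L$ has a negative eigenvalue with zero boundary data on it.
   Context: $\mathbb{S}^k$ is the round sphere of radius $\sqrt{2k}$ centered at the origin of $\mathbb{R}^{k+1}$, and $\mathbb{S}^k\times\mathbb{R}^{n-k}\subset\mathbb{R}^{k+1}\times\mathbb{R}^{n-k}$. Stability operator: $Lf=\Delta f-\tfrac12\langle\vec x,\nabla f\rangle+(|A|^2+\tfrac12)f$; eigenvalue convention $Lu=-\lambda u$ with $u\in L^2(e^{-|\vec x|^2/4}d\mu)$. A region is stable if it carries a strictly positive function $u$ with $Lu=0$, and unstable otherwise. *)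

From Stdlib Require Import Reals Lra Lia Arith.
Open Scope R_scope.

(* Points of R^(n+1) are represented as functions nat -> R; only the
   coordinates 0..n are meaningful.  Coordinates 0..k form the R^(k+1)
   factor (containing S^k), coordinates k+1..n form the R^(n-k) factor. *)
Definition pt := nat -> R.

Definition upd (p : pt) (i : nat) (v : R) : pt :=
  fun j => if Nat.eqb j i then v else p j.

Definition line (f : pt -> R) (p : pt) (i : nat) : R -> R :=
  fun t => f (upd p i (p i + t)).

Definition cont_at (n : nat) (g : pt -> R) (p : pt) : Prop :=
  forall eps, 0 < eps -> exists delta, 0 < delta /\
    forall q : pt, (forall i, (i <= n)%nat -> Rabs (q i - p i) < delta) ->
      Rabs (g q - g p) < eps.

(* f is C^2 on the (open) set U of R^(n+1), with first partials d1 i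
   and second partials d2 i j (= d/dx_j d/dx_i f). *)
Definition C2_on_with (n : nat) (U : pt -> Prop) (f : pt -> R)
  (d1 : nat -> pt -> R) (d2 : nat -> nat -> pt -> R) : Prop :=
  forall p, U p ->
    cont_at n f p /\
    forall i j, (i <= n)%nat -> (j <= n)%nat ->
      derivable_pt_lim (line f p i) 0 (d1 i p) /\
      derivable_pt_lim (line (d1 i) p j) 0 (d2 i j p) /\
      cont_at n (d1 i) p /\ cont_at n (d2 i j) p.

Definition rad (k : nat) : R := sqrt (2 * INR k).

Definition xnorm2 (k : nat) (p : pt) : R := sum_f_R0 (fun i => (p i) ^ 2) k.

Definition on_cyl (k : nat) (p : pt) : Prop := xnorm2 k p = (rad k) ^ 2.

Definition ydot (n k : nat) (a : nat -> R) (p : pt) : R :=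
  sum_f_R0 (fun j => a j * p (S k + j)%nat) (n - k - 1).

(* squared norm of the second fundamental form of S^k x R^(n-k):
   k principal curvatures equal to 1/rad, the others 0 *)
Definition normA2 (k : nat) : R := INR k / (rad k) ^ 2.

(* radial projection onto Sigma (0-homogeneous in the R^(k+1) factor);
   a function u on Sigma is extended by u o cyl_proj to a neighbourhood *)
Definition cyl_proj (n k : nat) (p : pt) : pt :=
  fun i => if Nat.leb i k then rad k * p i / sqrt (xnorm2 k p)
           else if Nat.leb i n then p i else 0.

Definition region (n k : nat) (a : nat -> R) (p : pt) : Prop :=
  on_cyl k p /\ 0 < ydot n k a p.
Definition nbhd (n k : nat) (a : nat -> R) (p : pt) : Prop :=
  0 < xnorm2 k p /\ 0 < ydot n k a p.

(* Stability operator applied to u at p in Sigma, computed from the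
   partials of the 0-homogeneous extension ut = u o cyl_proj:
   L u = Delta_Sigma u - 1/2 <x, grad u> + (|A|^2 + 1/2) u. *)
Definition Lop (n k : nat) (ut : pt -> R) (d1 : nat -> pt -> R)
  (d2 : nat -> nat -> pt -> R) (p : pt) : R :=
  sum_f_R0 (fun i => d2 i i p) n
  - / 2 * sum_f_R0 (fun i => p i * d1 i p) n
  + (normA2 k + / 2) * ut p.

Definition stable_halfcyl (n k : nat) (a : nat -> R) : Prop :=
  exists (u : pt -> R) (d1 : nat -> pt -> R) (d2 : nat -> nat -> pt -> R),
    C2_on_with n (nbhd n k a) (fun p => u (cyl_proj n k p)) d1 d2 /\
    (forall p, region n k a p -> 0 < u (cyl_proj n k p)) /\
    (forall p, region n k a p ->
       Lop n k (fun q => u (cyl_proj n k q)) d1 d2 p = 0).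

From Stdlib Require Import Reals Lra Lia Arith Psatz FunctionalExtensionality.
From Coquelicot Require Import Coquelicot.
From mathcomp Require all_boot all_order all_algebra all_classical all_reals
  all_analysis Rstruct Rstruct_topology.
Open Scope R_scope.

(* Write y for the R^(n-k)-component of a point, t = <a,y>/|a| for its signed
   distance to the boundary hyperplane of H and z = |y|^2 - t^2 for its
   squared distance to the line R a.  The test function
        Phi = G0 (t - 1/10) * (R - z),   G0 s = 6 s + 2 s^2 - s^3/2,
   with R = 8 (n-k), depends on y only.  It is nonnegative on the compact set
   K = S^k x {1/10 <= t <= 1/10 + 6, z <= R} inside S^k x H, positive exactly
   on its interior, and satisfies L Phi > 0 there (LPhi_pos, an explicit
   polynomial inequality; on the cylinder |A|^2 = 1/2).

   Suppose u > 0 solves L u = 0 on S^k x H.  The continuous ratio Phi/u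
   attains a maximum m > 0 on K (extreme value theorem, imported from
   MathComp-Analysis through an embedding of R^(n+1) into row vectors).  At a
   maximum point p, Phi <= m u nearby (u is 0-homogeneous in the R^(k+1)
   factor) with equality at p, so along every coordinate line the first
   derivatives of Phi and m u agree and the second derivatives compare.
   Summing gives  0 < L Phi (p) <= m L u (p) = 0, a contradiction. *)

Lemma cont_const n c p : cont_at n (fun _ => c) p.
Proof. intros e he; exists 1; split; [lra|]; intros; rewrite Rminus_diag, Rabs_R0; lra. Qed.

Lemma cont_coord n i p : (i <= n)%nat -> cont_at n (fun q => q i) p.
Proof. intros hi e he; exists e; split; [lra|]; intros q hq; apply hq; lia. Qed.

Lemma cont_plus n f g p :
  cont_at n f p -> cont_at n g p -> cont_at n (fun q => f q + g q) p.
Proof.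
  intros hf hg e he.
  destruct (hf (e/2)) as [d1 [hd1 H1]]; [lra|].
  destruct (hg (e/2)) as [d2 [hd2 H2]]; [lra|].
  exists (Rmin d1 d2); split; [apply Rmin_pos; lra|].
  intros q hq.
  assert (A1 : Rabs (f q - f p) < e/2).
  { apply H1; intros i hi; specialize (hq i hi); pose proof (Rmin_l d1 d2); lra. }
  assert (A2 : Rabs (g q - g p) < e/2).
  { apply H2; intros i hi; specialize (hq i hi); pose proof (Rmin_r d1 d2); lra. }
  replace (f q + g q - (f p + g p)) with ((f q - f p) + (g q - g p)) by ring.
  pose proof (Rabs_triang (f q - f p) (g q - g p)); lra.
Qed.

Lemma cont_comp n f (h : R -> R) p :
  cont_at n f p -> continuity_pt h (f p) -> cont_at n (fun q => h (f q)) p.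
Proof.
  intros hf hh e he.
  destruct (hh e he) as [b [hb H]].
  destruct (hf b hb) as [d [hd Hd]].
  exists d; split; [lra|]; intros q hq.
  specialize (Hd q hq).
  destruct (Req_dec (f q) (f p)) as [E|E].
  - rewrite E, Rminus_diag, Rabs_R0; lra.
  - apply (H (f q)); split; [split; [exact I| auto]| exact Hd].
Qed.

Lemma cont_scal n c f p : cont_at n f p -> cont_at n (fun q => c * f q) p.
Proof. intros hf; apply (cont_comp n f (fun x => c * x)); auto; reg. Qed.

Lemma cont_opp n f p : cont_at n f p -> cont_at n (fun q => - f q) p.
Proof. intros hf; apply (cont_comp n f (fun x => - x)); auto; reg. Qed.

Lemma cont_sq n f p : cont_at n f p -> cont_at n (fun q => f q ^ 2) p.
Proof. intros hf; apply (cont_comp n f (fun x => x ^ 2)); auto; reg. Qed.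

(* Products, by polarization [4 f g = (f + g)^2 - (f - g)^2]. *)
Lemma cont_mult n f g p :
  cont_at n f p -> cont_at n g p -> cont_at n (fun q => f q * g q) p.
Proof.
  intros hf hg.
  assert (H : cont_at n (fun q => / 4 * ((f q + g q) ^ 2 + - (f q + - g q) ^ 2)) p).
  { apply cont_scal, cont_plus; [apply cont_sq, cont_plus; auto|].
    apply cont_opp, cont_sq, cont_plus; auto; apply cont_opp; auto. }
  intros e he; destruct (H e he) as [d [hd Hd]]; exists d; split; auto.
  intros q hq; specialize (Hd q hq).
  replace (f q * g q - f p * g p) with
    (/ 4 * ((f q + g q) ^ 2 + - (f q + - g q) ^ 2)
     - / 4 * ((f p + g p) ^ 2 + - (f p + - g p) ^ 2)) by field.
  exact Hd.
Qed.

Lemma cont_inv n f p : cont_at n f p -> f p <> 0 -> cont_at n (fun q => / f q) p.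
Proof.
  intros hf hne; apply (cont_comp n f (fun x => / x)); auto.
  apply (continuity_pt_inv (fun x => x)); auto; reg.
Qed.

Lemma cont_sum n (F : nat -> pt -> R) m p :
  (forall j, (j <= m)%nat -> cont_at n (F j) p) ->
  cont_at n (fun q => sum_f_R0 (fun j => F j q) m) p.
Proof.
  induction m; intros H; simpl.
  - apply H; lia.
  - apply cont_plus; [apply IHm; intros; apply H; lia| apply H; lia].
Qed.

Lemma cont_at_agree n f p q :
  cont_at n f p -> (forall i, (i <= n)%nat -> q i = p i) -> f q = f p.
Proof.
  intros hf hq.
  destruct (Req_dec (f q) (f p)) as [E|E]; auto.
  assert (hpos : 0 < Rabs (f q - f p)) by (apply Rabs_pos_lt; lra).
  destruct (hf _ hpos) as [d [hd Hd]].
  assert (Rabs (f q - f p) < Rabs (f q - f p)); [|lra].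
  apply Hd; intros i hi; rewrite hq by auto; rewrite Rminus_diag, Rabs_R0; lra.
Qed.

Definition pt_close (n : nat) (q p : pt) (e : R) : Prop :=
  forall i, (i <= n)%nat -> Rabs (q i - p i) < e.

Lemma pt_close_mono n q p e1 e2 : pt_close n q p e1 -> e1 <= e2 -> pt_close n q p e2.
Proof. intros h he i hi; specialize (h i hi); lra. Qed.

Lemma closed_le n f p c : cont_at n f p ->
  (forall e, 0 < e -> exists q, f q <= c /\ pt_close n q p e) -> f p <= c.
Proof.
  intros hf H.
  destruct (Rle_dec (f p) c) as [h|h]; auto.
  assert (hpos : 0 < f p - c) by lra.
  destruct (hf _ hpos) as [d [hd Hd]].
  destruct (H d hd) as [q [hq1 hq2]].
  specialize (Hd q hq2).
  pose proof (Rabs_def2 _ _ Hd); lra.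
Qed.

Lemma closed_ge n f p c : cont_at n f p ->
  (forall e, 0 < e -> exists q, c <= f q /\ pt_close n q p e) -> c <= f p.
Proof.
  intros hf H.
  assert (- f p <= - c); [|lra].
  apply (closed_le n (fun q => - f q)); [apply cont_opp; auto|].
  intros e he; destruct (H e he) as [q [h1 h2]]; exists q; split; [lra|auto].
Qed.

Lemma sum_nonneg (F : nat -> R) m :
  (forall i, (i <= m)%nat -> 0 <= F i) -> 0 <= sum_f_R0 F m.
Proof.
  induction m; intros H; simpl; [apply H; lia|].
  assert (0 <= sum_f_R0 F m) by (apply IHm; intros; apply H; lia).
  assert (0 <= F (S m)) by (apply H; lia). lra.
Qed.

Lemma sum_term_le (F : nat -> R) m j : (forall i, (i <= m)%nat -> 0 <= F i) ->
  (j <= m)%nat -> F j <= sum_f_R0 F m.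
Proof.
  induction m; intros H hj.
  - simpl; replace j with 0%nat by lia; lra.
  - simpl. destruct (Nat.eq_dec j (S m)) as [E|E].
    + subst. assert (0 <= sum_f_R0 F m); [|lra].
      apply sum_nonneg; intros; apply H; lia.
    + assert (F j <= sum_f_R0 F m) by (apply IHm; [intros; apply H; lia| lia]).
      assert (0 <= F (S m)) by (apply H; lia). lra.
Qed.

Lemma sum_linear3 (f g h : nat -> R) K1 K2 K3 m :
  sum_f_R0 (fun j => f j * K1 + g j * K2 + h j * K3) m =
  K1 * sum_f_R0 f m + K2 * sum_f_R0 g m + K3 * sum_f_R0 h m.
Proof. rewrite !sum_plus, !scal_sum. ring. Qed.

Lemma sum_affine (f g : nat -> R) K1 K2 K3 m :
  sum_f_R0 (fun j => f j * K1 + g j * K2 + K3) m =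
  K1 * sum_f_R0 f m + K2 * sum_f_R0 g m + K3 * INR (S m).
Proof. rewrite !sum_plus, !scal_sum, sum_cte. ring. Qed.

Lemma sum_tail n k (H : nat -> R) : (k < n)%nat ->
  (forall i, (i <= k)%nat -> H i = 0) ->
  sum_f_R0 H n = sum_f_R0 (fun j => H (S k + j)%nat) (n - k - 1).
Proof.
  intros hkn hz. rewrite (tech2 H k n hkn). rewrite sum_eq_R0 by auto.
  replace (n - S k)%nat with (n - k - 1)%nat by lia. ring.
Qed.

Lemma sq_le_abs x M : x ^ 2 <= M -> Rabs x <= M + 1.
Proof. intros h. pose proof (Rabs_pos x). rewrite <- pow2_abs in h. nra. Qed.

Lemma shift_deriv f t l :
  derivable_pt_lim (fun s => f (t + s)) 0 l -> derivable_pt_lim f t l.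
Proof.
  intros H e he. destruct (H e he) as [d Hd]. exists d. intros h hh hd.
  specialize (Hd h hh hd). replace (t + (0 + h)) with (t + h) in Hd by ring.
  replace (t + 0) with t in Hd by ring. exact Hd.
Qed.

(* Second-order necessary condition for a local maximum at 0: F' (0) = 0 and
   F'' (0) <= 0.  Only the existence of F' near 0 and of F'' at 0 is assumed;
   F'' (0) > 0 would make F' positive just right of 0, hence F increasing
   there by the mean value theorem. *)
Lemma local_max_second_order (F F1 : R -> R) F2 d : 0 < d ->
  (forall t, Rabs t < d -> derivable_pt_lim F t (F1 t)) ->
  derivable_pt_lim F1 0 F2 ->
  (forall t, Rabs t < d -> F t <= F 0) -> F1 0 = 0 /\ F2 <= 0.
Proof.
  intros hd HF HF1 Hmax.
  assert (E0 : F1 0 = 0).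
  { assert (pr : derivable_pt F 0).
    { exists (F1 0). apply HF. rewrite Rabs_R0; lra. }
    rewrite <- (derive_pt_eq_0 F 0 (F1 0) pr) by (apply HF; rewrite Rabs_R0; lra).
    apply (deriv_maximum F (-d) d 0 pr); try lra.
    intros x h1 h2; apply Hmax; apply Rabs_def1; lra. }
  split; auto.
  destruct (Rle_dec F2 0) as [h|h]; auto. exfalso.
  assert (hF2 : 0 < F2) by lra.
  destruct (HF1 F2 hF2) as [d' Hd'].
  set (h0 := Rmin d (pos d') / 2).
  assert (hm : 0 < Rmin d (pos d')) by (apply Rmin_pos; [lra| apply cond_pos]).
  assert (h0pos : 0 < h0) by (unfold h0; lra).
  assert (h0d : h0 < d) by (unfold h0; pose proof (Rmin_l d d'); lra).
  assert (h0d' : h0 < d') by (unfold h0; pose proof (Rmin_r d d'); lra).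
  destruct (MVT_cor2 F F1 0 h0) as [c [Ec Hc]]; auto.
  { intros c hc. apply HF. apply Rabs_def1; lra. }
  assert (F1 c > 0).
  { assert (hc0 : c <> 0) by lra.
    assert (hcd : Rabs c < d') by (apply Rabs_def1; lra).
    specialize (Hd' c hc0 hcd).
    rewrite Rplus_0_l, E0, Rminus_0_r in Hd'.
    pose proof (Rabs_def2 _ _ Hd') as [_ H2].
    assert (0 < F1 c / c) by lra.
    assert (F1 c = F1 c / c * c) by (field; lra).
    nra. }
  assert (F h0 <= F 0) by (apply Hmax; apply Rabs_def1; lra).
  nra.
Qed.

Lemma upd_same p i v : upd p i v i = v.
Proof. unfold upd; rewrite Nat.eqb_refl; auto. Qed.

Lemma upd_upd p i v w : upd (upd p i v) i w = upd p i w.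
Proof.
  apply functional_extensionality; intros j; unfold upd; destruct (Nat.eqb j i); auto.
Qed.

Lemma upd_id p i : upd p i (p i + 0) = p.
Proof.
  apply functional_extensionality; intros j; unfold upd.
  destruct (Nat.eqb_spec j i); subst; auto; ring.
Qed.

Lemma line_shift f p i t s : line f (upd p i (p i + t)) i s = line f p i (t + s).
Proof. unfold line; rewrite upd_same, upd_upd; f_equal; f_equal; ring. Qed.

Lemma upd_close n p i t e : Rabs t < e -> 0 < e -> pt_close n (upd p i (p i + t)) p e.
Proof.
  intros h he j hj; unfold upd; destruct (Nat.eqb_spec j i).
  - subst; replace (p i + t - p i) with t by ring; auto.
  - rewrite Rminus_diag, Rabs_R0; auto.
Qed.

Lemma sum_upd (f : nat -> R -> R) p i v b m :
  sum_f_R0 (fun j => f j (upd p i v (b + j)%nat)) m =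
  sum_f_R0 (fun j => f j (p (b + j)%nat)) m +
  (if andb (Nat.leb b i) (Nat.leb i (b + m))
   then f (i - b)%nat v - f (i - b)%nat (p i) else 0).
Proof.
  induction m; simpl.
  - unfold upd. destruct (Nat.eqb_spec (b + 0) i).
    + subst. rewrite Nat.leb_refl.
      replace (Nat.leb b (b+0)) with true by (symmetry; apply Nat.leb_le; lia).
      simpl. replace (b + 0 - b)%nat with 0%nat by lia. ring.
    + destruct (Nat.leb_spec b i); destruct (Nat.leb_spec i (b + 0)); simpl; try lia; ring.
  - rewrite IHm. unfold upd at 1. destruct (Nat.eqb_spec (b + S m) i).
    + subst. replace (Nat.leb b (b + S m)) with true by (symmetry; apply Nat.leb_le; lia).
      replace (Nat.leb (b + S m) (b + m)) with false by (symmetry; apply Nat.leb_gt; lia).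
      rewrite Nat.leb_refl. simpl. replace (b + S m - b)%nat with (S m) by lia. ring.
    + destruct (Nat.leb_spec b i); destruct (Nat.leb_spec i (b + m));
        destruct (Nat.leb_spec i (b + S m)); simpl; try lia; ring.
Qed.

(* Extreme value theorem for [cont_at]-continuous functions on a closed and
   bounded set of R^(n+1), deduced from [EVT_max_rV] of MathComp-Analysis by
   viewing the first n+1 coordinates of a point as a row vector. *)
Module CompactMax.
Import all_boot all_order all_algebra all_classical all_reals all_analysis
  Rstruct Rstruct_topology.
Import Order.TTheory GRing.Theory Num.Theory.
Local Open Scope classical_set_scope.
Local Open Scope ring_scope.

Definition emb (n : nat) (v : 'rV[R]_(n.+1)) : pt :=
  fun i => if (i <= n)%N then v ord0 (inord i) else 0%R.

Arguments emb {n}.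

Lemma emb_row n (p : pt) i : (i <= n)%N -> emb (\row_(j < n.+1) p j) i = p i.
Proof. move=> h; rewrite /emb h mxE inordK //. Qed.

Lemma emb_close n (v w : 'rV[R]_(n.+1)) (e : R) :
  ball v e w -> forall i, Peano.le i n -> Rlt (Rabs (emb w i - emb v i)) e.
Proof.
move=> vw i /ssrnat.leP ilen; rewrite /emb ilen.
move: vw; rewrite /ball /= /mx_ball => -[_ vw].
have := vw ord0 (inord i); rewrite /ball /= => /RltP.
by rewrite Rabs_minus_sym.
Qed.

Lemma cont_at_attains_max (n : nat) (B : R) (K : pt -> Prop) (f : pt -> R) :
  (forall p, K p -> forall i, Peano.le i n -> Rle (Rabs (p i)) B) ->
  (forall p, (forall eps, Rlt 0 eps -> exists q, K q /\ pt_close n q p eps) -> K p) ->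
  (exists p, K p) ->
  (forall p, K p -> cont_at n f p) ->
  exists p, K p /\ forall q, K q -> Rle (f q) (f p).
Proof.
move=> Kb Kc [p0 Kp0] fc.
pose A := [set v : 'rV[R]_(n.+1) | K (emb v)].
have KA : forall q, K q -> A (\row_(j < n.+1) q j).
  move=> q Kq; apply: Kc => eps eps0; exists q; split => // i /ssrnat.leP ilen.
  by rewrite emb_row // Rminus_diag Rabs_R0.
have A0 : A !=set0 by exists (\row_(j < n.+1) p0 j); exact: KA.
have cA : compact A.
  apply: (@subclosed_compact _ _
    [set v : 'rV[R]_n.+1 | forall i, `[(- B), B]%classic (v ord0 i)]).
  - move=> v clv; apply: Kc => eps /RltP eps0.
    have := clv (ball v eps) (nbhsx_ballx v eps eps0).
    by move=> [w [Aw vw]]; exists (emb w); split => //; exact: emb_close.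
  - by apply: (@rV_compact _ _ (fun=> `[(- B), B]%classic)) => _;
      exact: segment_compact.
  - move=> v Av i /=; rewrite in_itv /=.
    have := Kb _ Av i; rewrite /emb.
    have ilen : (i <= n)%N by rewrite -ltnS.
    have -> : (inord i : 'I_n.+1) = i by apply: val_inj; rewrite /= inordK.
    rewrite ilen => /(_ (elimT ssrnat.leP ilen)) h.
    by rewrite -ler_norml; apply/RleP.
have cf : {within A, continuous (f \o @emb n)}.
  apply: continuous_in_subspaceT => v /set_mem Av.
  move=> Bs /nbhs_ballP [e /RltP e0 eB].
  have [d [d0 hd]] := fc _ Av e e0.
  apply/nbhs_ballP; exists d; first by apply/RltP.
  move=> w vw /=.
  apply: eB; rewrite /ball /=; apply/RltP.
  change (Rlt (Rabs (Rminus (f (emb v)) (f (emb w)))) e).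
  by rewrite Rabs_minus_sym; apply: hd; exact: emb_close.
have [c /set_mem Ac cmax] := EVT_max_rV A0 cA cf.
exists (emb c); split => // q Kq.
rewrite -(cont_at_agree n f q (emb (\row_(j < n.+1) q j)) (fc q Kq)).
  by apply/RleP; apply: cmax; apply/mem_set; exact: KA.
by move=> i /ssrnat.leP ilen; rewrite emb_row.
Qed.
End CompactMax.

Definition G0 x := 6*x + 2*x^2 - x^3/2.
Definition G1 x := 6 + 4*x - 3/2*x^2.
Definition G2 x := 4 - 3*x.

Lemma G0_pos s : 0 < s < 6 -> 0 < G0 s.
Proof. intros h. unfold G0. nra. Qed.

Lemma G0_nonneg s : 0 <= s <= 6 -> 0 <= G0 s.
Proof. intros h. unfold G0. nra. Qed.

Lemma G0_pos_inv s : 0 <= s <= 6 -> 0 < G0 s -> 0 < s < 6.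
Proof.
  intros h hg. destruct (Req_dec s 0) as [E|E]; [subst; unfold G0 in hg; lra|].
  destruct (Req_dec s 6) as [E'|E']; [subst; unfold G0 in hg; lra| lra].
Qed.

(* The one-variable inequality behind L Phi > 0:  for s >= 0,
   G2 - (s + 1/10) G1 / 2 + 3 G0 / 4 = 4 + 28/10 s - 15/8 s^2 + 3/8 s^3 > 0. *)
Lemma profile_ineq s : 0 <= s -> 0 < G2 s - /2*(s + /10)*G1 s + 3/4 * G0 s.
Proof.
  intros h. unfold G0, G1, G2.
  assert (0 <= s*((s-16/10)*(s-16/10))) by (apply Rmult_le_pos; [lra| apply Rle_0_sqr]).
  nra.
Qed.

(* L Phi > 0 in the variables s = t - 1/10, Q = R - z, z, D = n - k:
   the expression is Q (G2 - (s + 1/10) G1/2 + 3 G0/4) + G0 (2 + 3z/4). *)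
Lemma LPhi_ineq s Q z D : 0 < s < 6 -> 0 <= z -> Q = 8*D - z -> 0 < Q ->
  0 < Q*(G2 s - /2*(s + /10)*G1 s + G0 s) + G0 s * (2 - 2*D + z).
Proof.
  intros hs hz hQ hQp. pose proof (profile_ineq s ltac:(lra)). pose proof (G0_pos s hs).
  replace (Q*(G2 s - /2*(s + /10)*G1 s + G0 s) + G0 s * (2 - 2*D + z)) with
   (Q*(G2 s - /2*(s + /10)*G1 s + 3/4*G0 s) + G0 s * (2 + 3/4*z)) by (rewrite hQ; field).
  nra.
Qed.

(* The test function along a coordinate line, as an explicit function of the
   displacement t: here s, r, x are <a,y>, |y|^2 and the moving coordinate at
   the base point, al and ga the rates at which <a,y> and |y|^2 depend on it,
   c = |a| and A = |a|^2.  psi1 and psi2 are its first two derivatives. *)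
Definition psi c A e R0 s r x al ga t :=
  G0 ((s + al*t)/c - e) * (R0 - ((r + ga*((x+t)^2 - x^2)) - (s+al*t)^2/A)).
Definition psi1 c A e R0 s r x al ga t :=
  G1 ((s + al*t)/c - e) * (al/c) * (R0 - ((r + ga*((x+t)^2 - x^2)) - (s+al*t)^2/A))
  + G0 ((s + al*t)/c - e) * (-(ga*(2*(x+t))) + 2*(s+al*t)*al/A).
Definition psi2 c A e R0 s r x al ga :=
  G2 (s/c - e) * (al/c)^2 * (R0 - (r - s^2/A))
  + 2 * G1 (s/c - e) * (al/c) * (-(ga*(2*x)) + 2*s*al/A)
  + G0 (s/c - e) * (-(2*ga) + 2*al^2/A).

Lemma psi_deriv c A e R0 s r x al ga t : c <> 0 -> A <> 0 ->
  derivable_pt_lim (psi c A e R0 s r x al ga) t (psi1 c A e R0 s r x al ga t).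
Proof.
  intros hc hA. apply is_derive_Reals. unfold psi, psi1, G0, G1.
  auto_derive; [auto|]. field; auto.
Qed.

Lemma psi1_deriv c A e R0 s r x al ga : c <> 0 -> A <> 0 ->
  derivable_pt_lim (psi1 c A e R0 s r x al ga) 0 (psi2 c A e R0 s r x al ga).
Proof.
  intros hc hA. apply is_derive_Reals. unfold psi2, psi1, G0, G1, G2.
  auto_derive; [auto|]. field; auto.
Qed.

(* Coordinates adapted to the half-space H = {<a,y> > 0}.  The y-block of a
   point p consists of the coordinates p (S k + j), j <= Dm n k. *)
Definition Dm (n k : nat) := (n - k - 1)%nat.
Definition sA n k (a : nat -> R) := sum_f_R0 (fun j => a j ^ 2) (Dm n k).
Definition r2 n k (p : pt) := sum_f_R0 (fun j => p (S k + j)%nat ^ 2) (Dm n k).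
(* the offset 1/10 keeping K away from the boundary of H, and the radius R *)
Definition ee := / 10.
Definition RR n k := 8 * INR (S (Dm n k)).
Definition tt n k a p := ydot n k a p / sqrt (sA n k a).
Definition z2 n k a p := r2 n k p - ydot n k a p ^ 2 / sA n k a.
Definition Phi n k a p := G0 (tt n k a p - ee) * (RR n k - z2 n k a p).
Definition Kset n k a p :=
  on_cyl k p /\ ee <= tt n k a p <= ee + 6 /\ z2 n k a p <= RR n k.

Definition ycond n k i := andb (Nat.leb (S k) i) (Nat.leb i (S k + Dm n k)).
Definition al n k (a : nat -> R) i := if ycond n k i then a (i - S k)%nat else 0.
Definition ga n k i := if ycond n k i then 1 else 0.

Definition Phi_line n k a p i :=
  psi (sqrt (sA n k a)) (sA n k a) ee (RR n k) (ydot n k a p) (r2 n k p) (p i)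
    (al n k a i) (ga n k i).
Definition Phi_line1 n k a p i :=
  psi1 (sqrt (sA n k a)) (sA n k a) ee (RR n k) (ydot n k a p) (r2 n k p) (p i)
    (al n k a i) (ga n k i).
Definition Phi_line2 n k a p i :=
  psi2 (sqrt (sA n k a)) (sA n k a) ee (RR n k) (ydot n k a p) (r2 n k p) (p i)
    (al n k a i) (ga n k i).

Lemma ydot_upd n k a p i t :
  ydot n k a (upd p i (p i + t)) = ydot n k a p + al n k a i * t.
Proof.
  unfold ydot. rewrite (sum_upd (fun j x => a j * x)). fold (Dm n k).
  unfold al, ycond. destruct (andb _ _); ring.
Qed.

Lemma r2_upd n k p i t :
  r2 n k (upd p i (p i + t)) = r2 n k p + ga n k i * ((p i + t)^2 - p i ^2).
Proof.
  unfold r2. rewrite (sum_upd (fun j x => x ^ 2)).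
  unfold ga, ycond. destruct (andb _ _); ring.
Qed.

Lemma Phi_upd n k a p i t : Phi n k a (upd p i (p i + t)) = Phi_line n k a p i t.
Proof. unfold Phi, Phi_line, psi, tt, z2. rewrite ydot_upd, r2_upd. reflexivity. Qed.

Lemma Phi_line_deriv n k a p i t : 0 < sA n k a ->
  derivable_pt_lim (Phi_line n k a p i) t (Phi_line1 n k a p i t).
Proof.
  intros hA. apply psi_deriv; [|lra].
  assert (0 < sqrt (sA n k a)) by (apply sqrt_lt_R0; auto). lra.
Qed.

Lemma Phi_line1_deriv n k a p i : 0 < sA n k a ->
  derivable_pt_lim (Phi_line1 n k a p i) 0 (Phi_line2 n k a p i).
Proof.
  intros hA. apply psi1_deriv; [|lra].
  assert (0 < sqrt (sA n k a)) by (apply sqrt_lt_R0; auto). lra.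
Qed.

Lemma ycond_y n k j : (j <= Dm n k)%nat -> ycond n k (S k + j) = true.
Proof. intros h; unfold ycond; apply andb_true_intro; split; apply Nat.leb_le; lia. Qed.

Lemma ycond_x n k i : (i <= k)%nat -> ycond n k i = false.
Proof.
  intros h; unfold ycond.
  replace (Nat.leb (S k) i) with false by (symmetry; apply Nat.leb_gt; lia). auto.
Qed.

Lemma al_y n k a j : (j <= Dm n k)%nat -> al n k a (S k + j) = a j.
Proof. intros h; unfold al; rewrite ycond_y by auto. f_equal; lia. Qed.

Lemma ga_y n k j : (j <= Dm n k)%nat -> ga n k (S k + j) = 1.
Proof. intros h; unfold ga; rewrite ycond_y by auto. auto. Qed.

Lemma al_x n k a i : (i <= k)%nat -> al n k a i = 0.
Proof. intros h; unfold al; rewrite ycond_x by auto. auto. Qed.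

Lemma ga_x n k i : (i <= k)%nat -> ga n k i = 0.
Proof. intros h; unfold ga; rewrite ycond_x by auto. auto. Qed.

Lemma A_pos n k a : (exists j, (j < n - k)%nat /\ a j <> 0) -> 0 < sA n k a.
Proof.
  intros [j [hj ha]].
  assert (0 < a j ^ 2) by (simpl; rewrite Rmult_1_r; apply Rsqr_pos_lt; auto).
  apply Rlt_le_trans with (a j ^ 2); auto.
  apply (sum_term_le (fun j => a j ^ 2)); [intros; apply pow2_ge_0| unfold Dm; lia].
Qed.

(* z >= 0: Cauchy-Schwarz, via 0 <= |y - l a|^2 with l = <a,y>/|a|^2. *)
Lemma z2_nonneg n k a p : 0 < sA n k a -> 0 <= z2 n k a p.
Proof.
  intros hA. set (l := ydot n k a p / sA n k a).
  assert (H : 0 <= sum_f_R0 (fun j => (p (S k + j)%nat - l * a j) ^ 2) (Dm n k))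
    by (apply sum_nonneg; intros; apply pow2_ge_0).
  rewrite (sum_eq _ (fun j => p (S k + j)%nat ^ 2 * 1
      + (a j * p (S k + j)%nat) * (-2 * l) + a j ^ 2 * (l^2))) in H by (intros; ring).
  rewrite sum_linear3 in H.
  change (sum_f_R0 (fun j : nat => p (S k + j)%nat ^ 2) (Dm n k)) with (r2 n k p) in H.
  change (sum_f_R0 (fun j : nat => a j * p (S k + j)%nat) (Dm n k))
    with (ydot n k a p) in H.
  change (sum_f_R0 (fun j : nat => a j ^ 2) (Dm n k)) with (sA n k a) in H.
  unfold z2. unfold l in H.
  replace (r2 n k p - ydot n k a p ^ 2 / sA n k a) with
    (1 * r2 n k p + -2 * (ydot n k a p / sA n k a) * ydot n k a p
     + (ydot n k a p / sA n k a) ^ 2 * sA n k a) by (field; lra).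
  lra.
Qed.

Lemma sum_Phi_line2 n k a p : (k < n)%nat -> 0 < sA n k a ->
  sum_f_R0 (Phi_line2 n k a p) n =
  G2 (tt n k a p - ee) * (RR n k - z2 n k a p)
  + G0 (tt n k a p - ee) * (2 - 2 * INR (S (Dm n k))).
Proof.
  intros hkn hA. unfold Phi_line2, tt, z2.
  assert (hc : sqrt (sA n k a) * sqrt (sA n k a) = sA n k a) by (apply sqrt_sqrt; lra).
  set (c := sqrt (sA n k a)) in *. set (A := sA n k a) in *.
  assert (hc0 : c <> 0) by (intro E; rewrite E in hc; lra).
  assert (hA0 : A <> 0) by lra.
  rewrite (sum_tail n k) by (auto; intros i hi; rewrite al_x, ga_x by auto;
    unfold psi2; field; try split; auto).
  fold (Dm n k).
  set (s := ydot n k a p). set (sg := s / c - ee).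
  set (Q := RR n k - (r2 n k p - s ^ 2 / A)).
  rewrite (sum_eq _ (fun j => a j ^ 2 * (G2 sg * Q / (c*c) + 4 * G1 sg * s / (c * A)
      + 2 * G0 sg / A) + (a j * p (S k + j)%nat) * (- 4 * G1 sg / c) + (- 2 * G0 sg))).
  2:{ intros j hj. rewrite al_y, ga_y by auto. unfold psi2. fold sg. fold Q.
      field. try split; auto. }
  rewrite sum_affine.
  change (sum_f_R0 (fun j : nat => a j ^ 2) (Dm n k)) with A.
  change (sum_f_R0 (fun j : nat => a j * p (S k + j)%nat) (Dm n k)) with s.
  rewrite hc. field. auto.
Qed.

Lemma sum_Phi_line1 n k a p : (k < n)%nat -> 0 < sA n k a ->
  sum_f_R0 (fun i => p i * Phi_line1 n k a p i 0) n =
  G1 (tt n k a p - ee) * tt n k a p * (RR n k - z2 n k a p)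
  + G0 (tt n k a p - ee) * (- 2 * z2 n k a p).
Proof.
  intros hkn hA. unfold Phi_line1, tt, z2.
  assert (hc : sqrt (sA n k a) * sqrt (sA n k a) = sA n k a) by (apply sqrt_sqrt; lra).
  set (c := sqrt (sA n k a)) in *. set (A := sA n k a) in *.
  assert (hc0 : c <> 0) by (intro E; rewrite E in hc; lra).
  assert (hA0 : A <> 0) by lra.
  rewrite (sum_tail n k) by (auto; intros i hi; rewrite al_x, ga_x by auto;
    unfold psi1; field; try split; auto).
  fold (Dm n k).
  set (s := ydot n k a p). set (sg := s / c - ee).
  set (Q := RR n k - (r2 n k p - s ^ 2 / A)).
  rewrite (sum_eq _ (fun j => (a j * p (S k + j)%nat) * (G1 sg * Q / c + 2 * G0 sg * s / A)
      + (p (S k + j)%nat ^ 2) * (- 2 * G0 sg) + 0)).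
  2:{ intros j hj. rewrite al_y, ga_y by auto. unfold psi1.
      replace ((s + a j * 0) / c - ee) with sg by (unfold sg; field; auto).
      replace (RR n k - (r2 n k p + 1 * ((p (S k + j)%nat + 0) ^ 2 - p (S k + j)%nat ^ 2)
        - (s + a j * 0) ^ 2 / A)) with Q by (unfold Q; field; auto).
      field. try split; auto. }
  rewrite sum_affine.
  change (sum_f_R0 (fun j : nat => p (S k + j)%nat ^ 2) (Dm n k)) with (r2 n k p).
  change (sum_f_R0 (fun j : nat => a j * p (S k + j)%nat) (Dm n k)) with s.
  unfold Q. field. auto.
Qed.

(* L Phi > 0 wherever Phi > 0 (with |A|^2 + 1/2 = 1 on the cylinder). *)
Lemma LPhi_pos n k a p : (k < n)%nat -> 0 < sA n k a ->
  0 < RR n k - z2 n k a p -> 0 < tt n k a p - ee < 6 ->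
  0 < sum_f_R0 (Phi_line2 n k a p) n
      - / 2 * sum_f_R0 (fun i => p i * Phi_line1 n k a p i 0) n + Phi n k a p.
Proof.
  intros hkn hA hQ hs.
  rewrite sum_Phi_line2, sum_Phi_line1 by auto. unfold Phi.
  pose proof (z2_nonneg n k a p hA) as hz.
  assert (Et : tt n k a p = (tt n k a p - ee) + / 10) by (unfold ee; ring).
  set (s := tt n k a p - ee) in *. set (z := z2 n k a p) in *.
  set (Q := RR n k - z) in *. set (D := INR (S (Dm n k))).
  rewrite Et.
  pose proof (LPhi_ineq s Q z D hs hz ltac:(unfold Q, RR; fold D; ring) hQ).
  eapply Rlt_le_trans; [eassumption|]. apply Req_le. field.
Qed.

Lemma cont_ydot n k a p : (k < n)%nat -> cont_at n (ydot n k a) p.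
Proof. intros h. unfold ydot. apply cont_sum. intros j hj. apply cont_scal, cont_coord. lia. Qed.

Lemma cont_r2 n k p : (k < n)%nat -> cont_at n (r2 n k) p.
Proof.
  intros h. unfold r2. apply cont_sum. intros j hj.
  apply cont_sq, cont_coord. unfold Dm in hj. lia.
Qed.

Lemma cont_xnorm2 n k p : (k < n)%nat -> cont_at n (xnorm2 k) p.
Proof. intros h. unfold xnorm2. apply cont_sum. intros j hj. apply cont_sq, cont_coord. lia. Qed.

Lemma cont_tt n k a p : (k < n)%nat -> cont_at n (tt n k a) p.
Proof.
  intros h. unfold tt.
  apply (cont_comp n (ydot n k a) (fun x => x / sqrt (sA n k a))); [apply cont_ydot; auto|].
  reg.
Qed.

Lemma cont_z2 n k a p : (k < n)%nat -> cont_at n (z2 n k a) p.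
Proof.
  intros h. unfold z2.
  apply (cont_plus n (r2 n k) (fun q => - (ydot n k a q ^ 2 / sA n k a)));
    [apply cont_r2; auto|].
  apply (cont_comp n (ydot n k a) (fun x => - (x ^ 2 / sA n k a)));
    [apply cont_ydot; auto|].
  reg.
Qed.

Lemma cont_Phi n k a p : (k < n)%nat -> cont_at n (Phi n k a) p.
Proof.
  intros h. unfold Phi. apply cont_mult.
  - apply (cont_comp n (tt n k a) (fun x => G0 (x - ee))); [apply cont_tt; auto|].
    unfold G0. reg.
  - apply (cont_plus n (fun _ => RR n k) (fun q => - z2 n k a q)); [apply cont_const|].
    apply cont_opp, cont_z2; auto.
Qed.

Lemma rad_pos k : (1 <= k)%nat -> 0 < rad k.
Proof. intros h. unfold rad. apply sqrt_lt_R0. apply le_INR in h. simpl in h. lra. Qed.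

Lemma rad_sq k : rad k ^ 2 = 2 * INR k.
Proof. unfold rad. rewrite pow2_sqrt; auto. pose proof (pos_INR k). lra. Qed.

Lemma normA2_half k : (1 <= k)%nat -> normA2 k = / 2.
Proof.
  intros hk. unfold normA2. rewrite rad_sq.
  assert (0 < INR k) by (apply lt_0_INR; lia). field. lra.
Qed.

Lemma cp_y n k q i : (S k <= i)%nat -> (i <= n)%nat -> cyl_proj n k q i = q i.
Proof.
  intros h1 h2. unfold cyl_proj.
  replace (Nat.leb i k) with false by (symmetry; apply Nat.leb_gt; lia).
  replace (Nat.leb i n) with true by (symmetry; apply Nat.leb_le; lia). auto.
Qed.

Lemma cp_x n k q i : (i <= k)%nat -> cyl_proj n k q i = rad k * q i / sqrt (xnorm2 k q).
Proof.
  intros h1. unfold cyl_proj.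
  replace (Nat.leb i k) with true by (symmetry; apply Nat.leb_le; lia). auto.
Qed.

(* Phi depends only on y, which the projection leaves unchanged. *)
Lemma ydot_cp n k a q : (k < n)%nat -> ydot n k a (cyl_proj n k q) = ydot n k a q.
Proof. intros h; unfold ydot; apply sum_eq; intros j hj; rewrite cp_y; auto; lia. Qed.

Lemma r2_cp n k q : (k < n)%nat -> r2 n k (cyl_proj n k q) = r2 n k q.
Proof. intros h; unfold r2; apply sum_eq; intros j hj; rewrite cp_y; auto; unfold Dm in hj; lia. Qed.

Lemma tt_cp n k a q : (k < n)%nat -> tt n k a (cyl_proj n k q) = tt n k a q.
Proof. intros h; unfold tt; rewrite ydot_cp; auto. Qed.

Lemma z2_cp n k a q : (k < n)%nat -> z2 n k a (cyl_proj n k q) = z2 n k a q.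
Proof. intros h; unfold z2; rewrite ydot_cp, r2_cp; auto. Qed.

Lemma Phi_cp n k a q : (k < n)%nat -> Phi n k a (cyl_proj n k q) = Phi n k a q.
Proof. intros h; unfold Phi; rewrite tt_cp, z2_cp; auto. Qed.

Lemma xnorm2_cp n k q : 0 < xnorm2 k q -> xnorm2 k (cyl_proj n k q) = rad k ^ 2.
Proof.
  intros hX. unfold xnorm2 at 1.
  assert (hs : sqrt (xnorm2 k q) * sqrt (xnorm2 k q) = xnorm2 k q) by (apply sqrt_sqrt; lra).
  assert (hs0 : sqrt (xnorm2 k q) <> 0) by (intro E; rewrite E in hs; lra).
  rewrite (sum_eq _ (fun i => q i ^ 2 * (rad k ^ 2 / xnorm2 k q))).
  2:{ intros i hi. rewrite cp_x by auto.
      replace ((rad k * q i / sqrt (xnorm2 k q)) ^ 2)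
        with (rad k ^ 2 * q i ^ 2 / (sqrt (xnorm2 k q) * sqrt (xnorm2 k q))) by (field; auto).
      rewrite hs. field. lra. }
  rewrite <- scal_sum. fold (xnorm2 k q). field. lra.
Qed.

Lemma cp_idem n k q : (1 <= k)%nat -> 0 < xnorm2 k q ->
  cyl_proj n k (cyl_proj n k q) = cyl_proj n k q.
Proof.
  intros hk hX. apply functional_extensionality; intros i.
  pose proof (rad_pos k hk) as hr.
  unfold cyl_proj at 1. destruct (Nat.leb_spec i k).
  - assert (0 < sqrt (xnorm2 k q)) by (apply sqrt_lt_R0; auto).
    assert (rad k <> 0) by lra. assert (sqrt (xnorm2 k q) <> 0) by lra.
    rewrite xnorm2_cp by auto. rewrite sqrt_pow2 by lra. rewrite cp_x by auto.
    field. auto.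
  - destruct (Nat.leb_spec i n).
    + rewrite cp_y by lia. auto.
    + unfold cyl_proj. replace (Nat.leb i k) with false by (symmetry; apply Nat.leb_gt; lia).
      replace (Nat.leb i n) with false by (symmetry; apply Nat.leb_gt; lia). auto.
Qed.

(* A point of K where Phi > 0: x = rad e_0, y = (1/10 + 3) a / |a|. *)
Definition p0 n k a : pt := fun i =>
  if Nat.eqb i 0 then rad k else if Nat.leb i k then 0 else
  if Nat.leb i n then (ee + 3) * a (i - S k)%nat / sqrt (sA n k a) else 0.

Section Compactum.
Variables (n k : nat) (a : nat -> R).
Hypotheses (hk1 : (1 <= k)%nat) (hkn : (k < n)%nat) (hA : 0 < sA n k a).

Lemma sqrt_sA_pos : 0 < sqrt (sA n k a).
Proof. apply sqrt_lt_R0; auto. Qed.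

Lemma ydot_tt p : ydot n k a p = tt n k a p * sqrt (sA n k a).
Proof. pose proof sqrt_sA_pos. unfold tt; field; lra. Qed.

Lemma K_region p : Kset n k a p -> region n k a p.
Proof.
  intros [h1 [h2 h3]]. split; auto.
  rewrite ydot_tt. pose proof sqrt_sA_pos. unfold ee in *. nra.
Qed.

Lemma K_nbhd p : Kset n k a p -> nbhd n k a p.
Proof.
  intros hp. destruct (K_region p hp) as [h1 h2]. split; auto.
  unfold on_cyl in h1. rewrite h1. pose proof (rad_pos k hk1). nra.
Qed.

Lemma sA_sqrt_sq : sqrt (sA n k a) * sqrt (sA n k a) = sA n k a.
Proof. apply sqrt_sqrt; lra. Qed.

Lemma p0_y j : (j <= Dm n k)%nat ->
  p0 n k a (S k + j)%nat = (ee + 3) * a j / sqrt (sA n k a).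
Proof.
  intros hj. unfold p0. simpl Nat.eqb.
  replace (Nat.leb (S k + j) k) with false by (symmetry; apply Nat.leb_gt; lia).
  replace (Nat.leb (S k + j) n) with true by (symmetry; apply Nat.leb_le; unfold Dm in hj; lia).
  replace (S k + j - S k)%nat with j by lia. reflexivity.
Qed.

Lemma p0_xnorm2 : xnorm2 k (p0 n k a) = rad k ^ 2.
Proof.
  unfold xnorm2. rewrite decomp_sum by lia. rewrite sum_eq_R0.
  - unfold p0; simpl. ring.
  - intros i hi. unfold p0. simpl Nat.eqb.
    replace (Nat.leb (S i) k) with true by (symmetry; apply Nat.leb_le; lia). simpl; ring.
Qed.

Lemma p0_tt : tt n k a (p0 n k a) = ee + 3.
Proof.
  pose proof sA_sqrt_sq as hc. pose proof sqrt_sA_pos as hc0.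
  unfold tt, ydot. fold (Dm n k).
  rewrite (sum_eq _ (fun j => a j ^ 2 * ((ee + 3) / sqrt (sA n k a)))).
  - rewrite <- scal_sum. fold (sA n k a).
    set (c := sqrt (sA n k a)) in *. rewrite <- hc. field. lra.
  - intros j hj. rewrite p0_y by auto. field. lra.
Qed.

Lemma p0_z2 : z2 n k a (p0 n k a) = 0.
Proof.
  pose proof sA_sqrt_sq as hc. pose proof sqrt_sA_pos as hc0.
  unfold z2. rewrite ydot_tt, p0_tt. unfold r2.
  rewrite (sum_eq _ (fun j => a j ^ 2 * ((ee + 3) ^ 2 / sA n k a))).
  - rewrite <- scal_sum. fold (sA n k a).
    replace (((ee + 3) * sqrt (sA n k a)) ^ 2)
      with ((ee + 3) ^ 2 * (sqrt (sA n k a) * sqrt (sA n k a))) by ring.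
    rewrite hc. field. lra.
  - intros j hj. rewrite p0_y by auto.
    replace (((ee + 3) * a j / sqrt (sA n k a)) ^ 2)
      with ((ee + 3)^2 * a j ^2 / (sqrt (sA n k a) * sqrt (sA n k a))) by (field; lra).
    rewrite hc. field. lra.
Qed.

Lemma p0_K : Kset n k a (p0 n k a) /\ 0 < Phi n k a (p0 n k a).
Proof.
  assert (hR : 0 < RR n k) by (unfold RR; pose proof (lt_0_INR (S (Dm n k)) ltac:(lia)); lra).
  unfold Kset, Phi, on_cyl. rewrite p0_xnorm2, p0_tt, p0_z2. unfold ee.
  split; [split; [auto| split; lra]|].
  apply Rmult_lt_0_compat; [apply G0_pos|]; lra.
Qed.

Lemma K_bound p i : Kset n k a p -> (i <= n)%nat ->
  Rabs (p i) <= 2 * INR k + RR n k + (ee + 6) ^ 2 + 1.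
Proof.
  intros [hc [ht hz]] hi.
  assert (hRR : 0 <= RR n k) by (unfold RR; pose proof (pos_INR (S (Dm n k))); lra).
  assert (hk0 : 0 <= INR k) by apply pos_INR.
  assert (h6 : 0 <= (ee + 6) ^ 2) by apply pow2_ge_0.
  apply sq_le_abs.
  destruct (le_lt_dec i k) as [h|h].
  - assert (p i ^ 2 <= 2 * INR k); [|lra].
    rewrite <- rad_sq. unfold on_cyl in hc. rewrite <- hc. unfold xnorm2.
    apply (sum_term_le (fun i => p i ^ 2)); auto. intros; apply pow2_ge_0.
  - assert (p i ^ 2 <= r2 n k p).
    { unfold r2. replace i with (S k + (i - S k))%nat by lia.
      apply (sum_term_le (fun j => p (S k + j)%nat ^ 2)); [intros; apply pow2_ge_0| unfold Dm; lia]. }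
    assert (Er : r2 n k p = z2 n k a p + tt n k a p ^ 2).
    { unfold z2. rewrite ydot_tt.
      pose proof sA_sqrt_sq as hc2.
      replace ((tt n k a p * sqrt (sA n k a)) ^ 2)
        with (tt n k a p ^ 2 * (sqrt (sA n k a) * sqrt (sA n k a))) by ring.
      rewrite hc2. field. lra. }
    assert (tt n k a p ^ 2 <= (ee + 6) ^ 2) by (unfold ee in *; nra).
    lra.
Qed.

Lemma K_closed p :
  (forall eps, 0 < eps -> exists q, Kset n k a q /\ pt_close n q p eps) -> Kset n k a p.
Proof.
  intros H. unfold Kset, on_cyl.
  split; [|split; [split|]].
  - apply Rle_antisym.
    + apply (closed_le n (xnorm2 k)); [apply cont_xnorm2; auto|].
      intros e he; destruct (H e he) as [q [[h1 _] h2]]; exists q; split; auto.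
      unfold on_cyl in h1; lra.
    + apply (closed_ge n (xnorm2 k)); [apply cont_xnorm2; auto|].
      intros e he; destruct (H e he) as [q [[h1 _] h2]]; exists q; split; auto.
      unfold on_cyl in h1; lra.
  - apply (closed_ge n (tt n k a)); [apply cont_tt; auto|].
    intros e he; destruct (H e he) as [q [[_ [h1 _]] h2]]; exists q; split; auto; lra.
  - apply (closed_le n (tt n k a)); [apply cont_tt; auto|].
    intros e he; destruct (H e he) as [q [[_ [h1 _]] h2]]; exists q; split; auto; lra.
  - apply (closed_le n (z2 n k a)); [apply cont_z2; auto|].
    intros e he; destruct (H e he) as [q [[_ [_ h1]] h2]]; exists q; split; auto; lra.
Qed.

Lemma Phi_pos_interior p : Kset n k a p -> 0 < Phi n k a p ->
  0 < RR n k - z2 n k a p /\ 0 < tt n k a p - ee < 6.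
Proof.
  intros [_ [ht hz]] hPhi. unfold Phi in hPhi.
  assert (g0 : 0 <= G0 (tt n k a p - ee)) by (apply G0_nonneg; lra).
  destruct (Req_dec (G0 (tt n k a p - ee)) 0) as [E|E]; [rewrite E in hPhi; lra|].
  split; [nra|]. apply G0_pos_inv; lra.
Qed.

Lemma K_interior p : Kset n k a p -> 0 < RR n k - z2 n k a p -> 0 < tt n k a p - ee < 6 ->
  exists d, 0 < d /\ forall q, pt_close n q p d ->
    0 < xnorm2 k q /\ nbhd n k a q /\ Kset n k a (cyl_proj n k q).
Proof.
  intros [Kc _] hQ hs. unfold on_cyl in Kc.
  set (et := Rmin (tt n k a p - ee) (ee + 6 - tt n k a p)).
  assert (het1 : et <= tt n k a p - ee) by apply Rmin_l.
  assert (het2 : et <= ee + 6 - tt n k a p) by apply Rmin_r.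
  assert (het : 0 < et) by (apply Rmin_pos; lra).
  assert (hr2 : 0 < rad k ^ 2) by (pose proof (rad_pos k hk1); nra).
  destruct (cont_tt n k a p hkn et het) as [dt [hdt Ht]].
  destruct (cont_z2 n k a p hkn _ hQ) as [dz [hdz Hz]].
  destruct (cont_xnorm2 n k p hkn _ hr2) as [dx [hdx Hx]].
  exists (Rmin dt (Rmin dz dx)). split; [apply Rmin_pos; [lra| apply Rmin_pos; lra]|].
  intros q hq.
  pose proof (Rmin_l dt (Rmin dz dx)). pose proof (Rmin_r dt (Rmin dz dx)).
  pose proof (Rmin_l dz dx). pose proof (Rmin_r dz dx).
  specialize (Ht q (pt_close_mono n q p _ dt hq ltac:(lra))).
  specialize (Hz q (pt_close_mono n q p _ dz hq ltac:(lra))).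
  specialize (Hx q (pt_close_mono n q p _ dx hq ltac:(lra))).
  apply Rabs_def2 in Ht. apply Rabs_def2 in Hz. apply Rabs_def2 in Hx.
  assert (hX : 0 < xnorm2 k q) by lra.
  split; [auto| split].
  - split; auto. rewrite ydot_tt.
    assert (0 < tt n k a q) by (assert (ee = / 10) by reflexivity; lra).
    pose proof sqrt_sA_pos. nra.
  - split; [unfold on_cyl; apply xnorm2_cp; auto|].
    rewrite tt_cp, z2_cp by auto. lra.
Qed.

End Compactum.

Section Touching.
Variables (n k : nat) (a : nat -> R).
Hypotheses (hk1 : (1 <= k)%nat) (hkn : (k < n)%nat) (hA : 0 < sA n k a).
Variables (ut : pt -> R) (d1 : nat -> pt -> R) (d2 : nat -> nat -> pt -> R).
Hypothesis ut_C2 : C2_on_with n (nbhd n k a) ut d1 d2.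
Hypothesis ut_pos : forall p, region n k a p -> 0 < ut p.
Hypothesis ut_homog : forall q, 0 < xnorm2 k q -> ut (cyl_proj n k q) = ut q.

Lemma ratio_max : exists p, Kset n k a p /\
  forall q, Kset n k a q -> Phi n k a q / ut q <= Phi n k a p / ut p.
Proof.
  apply (CompactMax.cont_at_attains_max n (2 * INR k + RR n k + (ee + 6) ^ 2 + 1)).
  - intros p hp i hi. apply (K_bound n k a); auto.
  - apply K_closed; auto.
  - exists (p0 n k a). apply p0_K; auto.
  - intros p hp. unfold Rdiv. apply cont_mult; [apply cont_Phi; auto|].
    apply cont_inv; [apply (ut_C2 p (K_nbhd n k a hk1 hA p hp))|].
    pose proof (ut_pos p (K_region n k a hA p hp)). lra.
Qed.

Lemma touching_point : exists p m d,
  Kset n k a p /\ 0 < RR n k - z2 n k a p /\ 0 < tt n k a p - ee < 6 /\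
  Phi n k a p = m * ut p /\ 0 < d /\
  forall q, pt_close n q p d -> nbhd n k a q /\ Phi n k a q <= m * ut q.
Proof.
  destruct ratio_max as [p [Kp Hmax]].
  set (m := Phi n k a p / ut p) in *.
  pose proof (ut_pos p (K_region n k a hA p Kp)) as hu.
  assert (Heq : Phi n k a p = m * ut p) by (unfold m; field; lra).
  assert (hm : 0 < m).
  { destruct (p0_K n k a hk1 hkn hA) as [K0 hPhi0].
    apply Rlt_le_trans with (Phi n k a (p0 n k a) / ut (p0 n k a)); [|apply Hmax; auto].
    pose proof (ut_pos _ (K_region n k a hA _ K0)).
    apply Rdiv_lt_0_compat; auto. }
  assert (hPhi : 0 < Phi n k a p) by (rewrite Heq; nra).
  destruct (Phi_pos_interior n k a p Kp hPhi) as [hQ hs].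
  destruct (K_interior n k a hk1 hkn hA p Kp hQ hs) as [d [hd Hq]].
  exists p, m, d. do 5 (split; [auto|]).
  intros q hq. destruct (Hq q hq) as [hX [Nq Kq]]. split; [exact Nq|].
  assert (huq : 0 < ut q).
  { rewrite <- (ut_homog q hX). apply ut_pos, (K_region n k a hA), Kq. }
  pose proof (Hmax _ Kq) as hw. fold m in hw.
  rewrite Phi_cp, ut_homog in hw by auto.
  apply Rmult_le_compat_r with (r := ut q) in hw; [|lra].
  unfold Rdiv in hw. rewrite Rmult_assoc, Rinv_l, Rmult_1_r in hw by lra. exact hw.
Qed.

Lemma line_comparison p m d :
  Phi n k a p = m * ut p -> 0 < d ->
  (forall q, pt_close n q p d -> nbhd n k a q /\ Phi n k a q <= m * ut q) ->
  forall i, (i <= n)%nat ->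
    Phi_line2 n k a p i <= m * d2 i i p /\ Phi_line1 n k a p i 0 = m * d1 i p.
Proof.
  intros Heq hd Hle i hi.
  assert (Np : nbhd n k a p) by (apply Hle; intros j _; rewrite Rminus_diag, Rabs_R0; lra).
  destruct (ut_C2 p Np) as [_ HD]. destruct (HD i i hi hi) as [_ [D2 _]].
  destruct (local_max_second_order
    (fun t => Phi_line n k a p i t - m * line ut p i t)
    (fun t => Phi_line1 n k a p i t - m * line (d1 i) p i t)
    (Phi_line2 n k a p i - m * d2 i i p) d hd) as [E1 E2].
  - intros t ht. apply derivable_pt_lim_minus; [apply Phi_line_deriv; auto|].
    apply (derivable_pt_lim_scal (line ut p i) m t), shift_deriv.
    replace (fun s => line ut p i (t + s)) with (line ut (upd p i (p i + t)) i)
      by (apply functional_extensionality; intros; apply line_shift).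
    destruct (ut_C2 _ (proj1 (Hle _ (upd_close n p i t d ht hd)))) as [_ HDt].
    apply (HDt i i hi hi).
  - apply derivable_pt_lim_minus; [apply Phi_line1_deriv; auto|].
    apply (derivable_pt_lim_scal (line (d1 i) p i) m 0). exact D2.
  - intros t ht. destruct (Hle _ (upd_close n p i t d ht hd)) as [_ hle].
    rewrite <- !Phi_upd. unfold line. rewrite upd_id. lra.
  - unfold line in E1. rewrite upd_id in E1. split; lra.
Qed.

Lemma operator_comparison p m d :
  Phi n k a p = m * ut p -> 0 < d ->
  (forall q, pt_close n q p d -> nbhd n k a q /\ Phi n k a q <= m * ut q) ->
  sum_f_R0 (Phi_line2 n k a p) n
    - / 2 * sum_f_R0 (fun i => p i * Phi_line1 n k a p i 0) n + Phi n k a p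
  <= m * (sum_f_R0 (fun i => d2 i i p) n - / 2 * sum_f_R0 (fun i => p i * d1 i p) n + ut p).
Proof.
  intros Heq hd Hle.
  pose proof (line_comparison p m d Heq hd Hle) as Hcmp.
  assert (S2 : sum_f_R0 (Phi_line2 n k a p) n <= m * sum_f_R0 (fun i => d2 i i p) n).
  { rewrite scal_sum. apply sum_Rle. intros i hi. rewrite Rmult_comm. apply (proj1 (Hcmp i hi)). }
  assert (S1 : sum_f_R0 (fun i => p i * Phi_line1 n k a p i 0) n
               = m * sum_f_R0 (fun i => p i * d1 i p) n).
  { rewrite scal_sum. apply sum_eq. intros i hi. rewrite (proj2 (Hcmp i hi)). ring. }
  rewrite S1, Heq. lra.
Qed.

End Touching.

Theorem proposition4p2 (n k : nat) (hk1 : (1 <= k)%nat) (hkn : (k <= n - 1)%nat)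
  (a : nat -> R) (ha : exists j, (j < n - k)%nat /\ a j <> 0) :
  ~ stable_halfcyl n k a.
Proof.
  intros [u [d1 [d2 [HC [Hpos HL]]]]].
  assert (hkn' : (k < n)%nat) by lia.
  pose proof (A_pos n k a ha) as hA.
  set (ut := fun q => u (cyl_proj n k q)) in *.
  assert (Hhom : forall q, 0 < xnorm2 k q -> ut (cyl_proj n k q) = ut q)
    by (intros q hq; unfold ut; rewrite cp_idem; auto).
  destruct (touching_point n k a hk1 hkn' hA ut d1 d2 HC Hpos Hhom)
    as [p [m [d [Kp [hQ [hs [Heq [hd Hle]]]]]]]].
  pose proof (LPhi_pos n k a p hkn' hA hQ hs) as HPhi.
  pose proof (operator_comparison n k a hA ut d1 d2 HC p m d Heq hd Hle) as Hcmp.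
  assert (Lu : sum_f_R0 (fun i => d2 i i p) n - / 2 * sum_f_R0 (fun i => p i * d1 i p) n
               + ut p = 0).
  { pose proof (HL p (K_region n k a hA p Kp)) as HLp.
    unfold Lop in HLp. rewrite normA2_half in HLp by auto. lra. }
  rewrite Lu, Rmult_0_r in Hcmp. lra.
Qed.
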